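(* Assume the abstract framework described in the context. For $f\in\mathcal{D}_2$ and $F\in\mathcal{H}_2$ with $\operatorname{Tr}_2F=f$, set $\operatorname{Tr}_2^\Omega\mathbf{D}^B_\Omega f=-\operatorname{Tr}_2F+\operatorname{Tr}_2\Pi^L(L(\mathbf{1}_\Omega F))$ and $\operatorname{Tr}_2^{\mathcal{C}}\mathbf{D}^B_{\mathcal{C}}f=-\operatorname{Tr}_2F+\operatorname{Tr}_2\Pi^L(L(\mathbf{1}_{\mathcal{C}}F))$. Then for all $f\in\mathcal{D}_2$ and $g\in\mathcal{N}_2$, $$\operatorname{Tr}_2^\Omega\mathbf{D}^B_\Omega f+\operatorname{Tr}_2^{\mathcal{C}}\mathbf{D}^B_{\mathcal{C}}f=-f,\qquad \mathbf{M}^\Omega_B\big((\mathbf{S}^L_\Omega g)|_\Omega\big)+\mathbf{M}^{\mathcal{C}}_B\big((\mathbf{S}^L_\Omega g)|_{\mathcal{C}}\big)=g,\qquad \mathbf{M}^\Omega_B(\mathbf{D}^B_\Omega f)-\mathbf{M}^{\mathcal{C}}_B(\mathbf{D}^B_{\mathcal{C}}f)=0.$$ If moreover there are bounded operators $\operatorname{Tr}_2^\Omega:\mathcal{H}_2^\Omega\to\mathcal{D}_2$ and $\operatorname{Tr}_2^{\mathcal{C}}:\mathcal{H}_2^{\mathcal{C}}\to\mathcal{D}_2$ such that $\operatorname{Tr}_2F=\operatorname{Tr}_2^\Omega(F|_\Omega)=\operatorname{Tr}_2^{\mathcal{C}}(F|_{\mathcal{C}})$ for all $F\in\mathcal{H}_2$,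 then in addition $\operatorname{Tr}_2^\Omega\big((\mathbf{S}^L_\Omega g)|_\Omega\big)-\operatorname{Tr}_2^{\mathcal{C}}\big((\mathbf{S}^L_\Omega g)|_{\mathcal{C}}\big)=0$ for all $g\in\mathcal{N}_2$.
   Context: Abstract framework. Let $\mathcal{H}_1,\mathcal{H}_2$ be complex Hilbert spaces, and for $j=1,2$ let $\widehat{\mathcal{H}}_j^\Omega$, $\widehat{\mathcal{H}}_j^{\mathcal{C}}$, $\widehat{\mathcal{D}}_j$ be normed (or seminormed) vector spaces, with bounded linear operators $\operatorname{Tr}_j:\mathcal{H}_j\to\widehat{\mathcal{D}}_j$ and bounded linear ''restriction'' operators $F\mapsto F|_\Omega\in\widehat{\mathcal{H}}_j^\Omega$, $F\mapsto F|_{\mathcal{C}}\in\widehat{\mathcal{H}}_j^{\mathcal{C}}$ on $\mathcal{H}_j$. Define $\mathcal{H}_j^\Omega=\{F|_\Omega:F\in\mathcal{H}_j\}$, $\mathcal{H}_j^{\mathcal{C}}$ and $\mathcal{D}_j=\{\operatorname{Tr}_jF:F\in\mathcal{H}_j\}$ with the quotient norms $\inf\|F\|_{\mathcal{H}_j}$ over preimages (modulo elements of norm zero). Let $\mathcal{N}_2=\mathcal{D}_1^*$, $\mathcal{N}_1=\mathcal{D}_2^*$ with duality pairings $\langle\cdot,\cdot\rangle$. Given are bounded bilinear forms $B:\mathcal{H}_1\times\mathcal{H}_2\to\mathbb{C}$, $B^\Omega:\mathcal{H}_1^\Omega\times\mathcal{H}_2^\Omega\to\mathbb{C}$, $B^{\mathcal{C}}:\mathcal{H}_1^{\mathcal{C}}\times\mathcal{H}_2^{\mathcal{C}}\to\mathbb{C}$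 and $\lambda>0$ such that for all $u\in\mathcal{H}_1$, $v\in\mathcal{H}_2$, $\varphi,\psi\in\mathcal{H}_j$: (i) $\sup_{w\ne0}|B(w,v)|/\|w\|_{\mathcal{H}_1}\ge\lambda\|v\|_{\mathcal{H}_2}$ and $\sup_{w\ne0}|B(u,w)|/\|w\|_{\mathcal{H}_2}\ge\lambda\|u\|_{\mathcal{H}_1}$; (ii) $B(u,v)=B^\Omega(u|_\Omega,v|_\Omega)+B^{\mathcal{C}}(u|_{\mathcal{C}},v|_{\mathcal{C}})$; (iii) if $\operatorname{Tr}_j\varphi=\operatorname{Tr}_j\psi$ there is $w\in\mathcal{H}_j$ with $w|_\Omega=\varphi|_\Omega$, $w|_{\mathcal{C}}=\psi|_{\mathcal{C}}$, $\operatorname{Tr}_jw=\operatorname{Tr}_j\varphi$. Definitions (for $\mathcal{O}\in\{\Omega,\mathcal{C}\}$): for $u\in\mathcal{H}_2^{\mathcal{O}}$, $(Lu)|_{\mathcal{O}}=0$ means $B^{\mathcal{O}}(\varphi|_{\mathcal{O}},u)=0$ whenever $\varphi\in\mathcal{H}_1$, $\operatorname{Tr}_1\varphi=0$; for such $u$, $\mathbf{M}^{\mathcal{O}}_Bu\in\mathcal{N}_2$ is defined by $\langle\operatorname{Tr}_1\varphi,\mathbf{M}^{\mathcal{O}}_Bu\rangle=B^{\mathcal{O}}(\varphi|_{\mathcal{O}},u)$ for all $\varphi\in\mathcal{H}_1$. For $u\in\mathcal{H}_2^{\mathcal{O}}$, $L(u\mathbf{1}_{\mathcal{O}})\in\mathcal{H}_1^*$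 is $\langle\varphi,L(u\mathbf{1}_{\mathcal{O}})\rangle=B^{\mathcal{O}}(\varphi|_{\mathcal{O}},u)$; $L(\mathbf{1}_{\mathcal{O}}F)=L(F|_{\mathcal O}\mathbf 1_{\mathcal O})$ for $F\in\mathcal{H}_2$. Newton potential: $\Pi^LH\in\mathcal{H}_2$ ($H\in\mathcal{H}_1^*$) is the unique element with $B(\varphi,\Pi^LH)=\langle\varphi,H\rangle$ for all $\varphi\in\mathcal{H}_1$. Single layer: for $g\in\mathcal{N}_2$, $\mathbf{S}^L_\Omega g\in\mathcal{H}_2$ is unique with $B(\varphi,\mathbf{S}^L_\Omega g)=\langle\operatorname{Tr}_1\varphi,g\rangle$ for all $\varphi\in\mathcal{H}_1$. Double layer: $\mathbf{D}^B_{\mathcal{O}}f=-F|_{\mathcal{O}}+(\Pi^L(L(\mathbf{1}_{\mathcal{O}}F)))|_{\mathcal{O}}\in\mathcal H_2^{\mathcal O}$ for any $F\in\mathcal H_2$ with $\operatorname{Tr}_2F=f\in\mathcal{D}_2$ (independent of the choice of $F$). The restrictions $(\mathbf S^L_\Omega g)|_{\mathcal O}$ and $\mathbf D^B_{\mathcal O}f$ satisfy $(Lu)|_{\mathcal O}=0$, so their Neumann boundary values are defined. *)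

From HB Require Import structures.
From mathcomp Require Import all_boot all_order all_algebra.
From mathcomp Require Import complex.
From mathcomp Require Import classical_sets boolp reals.
From Stdlib Require Import ClassicalEpsilon.

Set Implicit Arguments.
Unset Strict Implicit.
Unset Printing Implicit Defensive.

Import Order.TTheory GRing.Theory Num.Theory.
Local Open Scope ring_scope.
Local Open Scope classical_set_scope.

Section Framework.
Variable R : realType.
Local Notation C := R[i].

Definition cmod (z : C) : R := Normc.normc z.

Definition creal (z : C) : R := let: Complex a _ := z in a.

Definition is_seminorm (V : lmodType C) (n : V -> R) : Prop :=
  [/\ forall x, 0 <= n x,
      forall (a : C) x, n (a *: x) = cmod a * n x &
      forall x y, n (x + y) <= n x + n y].

Definition ipnorm (V : lmodType C) (ip : V -> V -> C) (x : V) : R :=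
  Num.sqrt (creal (ip x x)).

Definition is_hilbert (V : lmodType C) (ip : V -> V -> C) : Prop :=
  [/\ forall (a : C) x x' y, ip (a *: x + x') y = a * ip x y + ip x' y,
      forall x y, ip y x = (ip x y)^*,
      forall x, 0 <= ip x x,
      forall x, ip x x = 0 -> x = 0 &
      forall u : nat -> V,
        (forall e : R, 0 < e -> exists N, forall m n, (N <= m)%N -> (N <= n)%N ->
            ipnorm ip (u m - u n) < e) ->
        exists l : V, forall e : R, 0 < e -> exists N, forall n, (N <= n)%N ->
            ipnorm ip (u n - l) < e].

Definition is_linear (V W : lmodType C) (T : V -> W) : Prop :=
  forall (a : C) x y, T (a *: x + y) = a *: T x + T y.

Definition is_bounded_linear (V W : lmodType C) (nV : V -> R) (nW : W -> R)
    (T : V -> W) : Prop :=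
  is_linear T /\ exists M : R, forall x, nW (T x) <= M * nV x.

(* quotient (semi)norm on the range {T F : F in V}: inf of the norms of preimages *)
Definition qnorm (V W : Type) (nV : V -> R) (T : V -> W) (w : W) : R :=
  inf [set nV F | F in [set F | T F = w]].

(* equality in the normed range space {T F} modulo elements of norm zero;
   both a and b are required to lie in the range of T *)
Definition qeq (V W : lmodType C) (nV : V -> R) (T : V -> W) (a b : W) : Prop :=
  [/\ exists F, T F = a, exists F, T F = b & qnorm nV T (a - b) = 0].

Definition choice_of (T : Type) (t0 : T) (P : T -> Prop) : T :=
  epsilon (inhabits t0) P.

Record framework := Framework {
  H1 : lmodType C;  H2 : lmodType C;
  ip1 : H1 -> H1 -> C;  ip2 : H2 -> H2 -> C;
  HO1 : lmodType C; HC1 : lmodType C;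
  HO2 : lmodType C; HC2 : lmodType C;
  D1h : lmodType C; D2h : lmodType C;
  nHO1 : HO1 -> R; nHC1 : HC1 -> R; nHO2 : HO2 -> R; nHC2 : HC2 -> R;
  nD1 : D1h -> R; nD2 : D2h -> R;
  Tr1 : H1 -> D1h; Tr2 : H2 -> D2h;
  rO1 : H1 -> HO1; rC1 : H1 -> HC1;
  rO2 : H2 -> HO2; rC2 : H2 -> HC2;
  B : H1 -> H2 -> C;
  BO : HO1 -> HO2 -> C;
  BC : HC1 -> HC2 -> C;
  lam : R
}.

Variable fw : framework.

Definition hn1 : H1 fw -> R := ipnorm (@ip1 fw).
Definition hn2 : H2 fw -> R := ipnorm (@ip2 fw).

(* a bounded bilinear form on the quotient spaces {r1 phi} x {r2 psi}
   (with their quotient norms), tested through representatives *)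
Definition is_bounded_bilinear_on (X1 X2 : Type) (r1 : H1 fw -> X1) (r2 : H2 fw -> X2)
    (n1 : X1 -> R) (n2 : X2 -> R) (b : X1 -> X2 -> C) : Prop :=
  [/\ forall (a : C) x x' y, b (r1 (a *: x + x')) (r2 y) = a * b (r1 x) (r2 y) + b (r1 x') (r2 y),
      forall (a : C) x y y', b (r1 x) (r2 (a *: y + y')) = a * b (r1 x) (r2 y) + b (r1 x) (r2 y') &
      exists M : R, forall x y, cmod (b (r1 x) (r2 y)) <= M * n1 (r1 x) * n2 (r2 y)].

Record framework_axioms : Prop := FrameworkAxioms {
  ax_hilbert1 : is_hilbert (@ip1 fw);
  ax_hilbert2 : is_hilbert (@ip2 fw);
  ax_snHO1 : is_seminorm (@nHO1 fw);
  ax_snHC1 : is_seminorm (@nHC1 fw);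
  ax_snHO2 : is_seminorm (@nHO2 fw);
  ax_snHC2 : is_seminorm (@nHC2 fw);
  ax_snD1 : is_seminorm (@nD1 fw);
  ax_snD2 : is_seminorm (@nD2 fw);
  ax_Tr1 : is_bounded_linear hn1 (@nD1 fw) (@Tr1 fw);
  ax_Tr2 : is_bounded_linear hn2 (@nD2 fw) (@Tr2 fw);
  ax_rO1 : is_bounded_linear hn1 (@nHO1 fw) (@rO1 fw);
  ax_rC1 : is_bounded_linear hn1 (@nHC1 fw) (@rC1 fw);
  ax_rO2 : is_bounded_linear hn2 (@nHO2 fw) (@rO2 fw);
  ax_rC2 : is_bounded_linear hn2 (@nHC2 fw) (@rC2 fw);
  ax_B : is_bounded_bilinear_on id id hn1 hn2 (@B fw);
  ax_BO : is_bounded_bilinear_on (@rO1 fw) (@rO2 fw)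
            (qnorm hn1 (@rO1 fw)) (qnorm hn2 (@rO2 fw)) (@BO fw);
  ax_BC : is_bounded_bilinear_on (@rC1 fw) (@rC2 fw)
            (qnorm hn1 (@rC1 fw)) (qnorm hn2 (@rC2 fw)) (@BC fw);
  ax_lam : 0 < lam fw;
  ax_infsup1 : forall v : H2 fw,
    lam fw * hn2 v <= sup [set cmod (B w v) / hn1 w | w in [set w : H1 fw | w != 0]];
  ax_infsup2 : forall u : H1 fw,
    lam fw * hn1 u <= sup [set cmod (B u w) / hn2 w | w in [set w : H2 fw | w != 0]];
  ax_split : forall (u : H1 fw) (v : H2 fw), B u v = BO (rO1 u) (rO2 v) + BC (rC1 u) (rC2 v);
  ax_glue1 : forall phi psi : H1 fw, qeq hn1 (@Tr1 fw) (Tr1 phi) (Tr1 psi) ->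
    exists w, [/\ qeq hn1 (@rO1 fw) (rO1 w) (rO1 phi),
                  qeq hn1 (@rC1 fw) (rC1 w) (rC1 psi) &
                  qeq hn1 (@Tr1 fw) (Tr1 w) (Tr1 phi)];
  ax_glue2 : forall phi psi : H2 fw, qeq hn2 (@Tr2 fw) (Tr2 phi) (Tr2 psi) ->
    exists w, [/\ qeq hn2 (@rO2 fw) (rO2 w) (rO2 phi),
                  qeq hn2 (@rC2 fw) (rC2 w) (rC2 psi) &
                  qeq hn2 (@Tr2 fw) (Tr2 w) (Tr2 phi)]
}.

(* g in N_2 = D_1^* : a bounded linear functional on D_1 = {Tr_1 phi} with its
   quotient norm; it is represented by a function on \hat D_1 of which only the
   values <Tr_1 phi, g> := g (Tr_1 phi) matter. *)
Definition in_N2 (g : D1h fw -> C) : Prop :=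
  (forall (a : C) phi psi, g (Tr1 (a *: phi + psi)) = a * g (Tr1 phi) + g (Tr1 psi)) /\
  exists M : R, forall phi, cmod (g (Tr1 phi)) <= M * qnorm hn1 (@Tr1 fw) (Tr1 phi).

Definition N2_eq (g h : D1h fw -> C) : Prop :=
  forall phi : H1 fw, g (Tr1 phi) = h (Tr1 phi).

(* Neumann trace M^O_B u in N_2 for u in H_2^O with (Lu)|_O = 0:
   <Tr_1 phi, M^O_B u> = B^O(phi|_O, u) for all phi.
   Generic in O: r1 = restriction to O on H_1, b = B^O. *)
Definition Mneu (X1 X2 : Type) (r1 : H1 fw -> X1) (b : X1 -> X2 -> C) (u : X2)
    : D1h fw -> C :=
  choice_of (fun _ => 0) (fun m => in_N2 m /\ forall phi, m (Tr1 phi) = b (r1 phi) u).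

Definition PiL (H : H1 fw -> C) : H2 fw :=
  choice_of 0 (fun u => forall phi, B phi u = H phi).

Definition SL (g : D1h fw -> C) : H2 fw :=
  choice_of 0 (fun u => forall phi, B phi u = g (Tr1 phi)).

(* L(1_O F) in H_1^* : phi |-> B^O(phi|_O, F|_O) *)
Definition L1 (X1 X2 : Type) (r1 : H1 fw -> X1) (r2 : H2 fw -> X2)
    (b : X1 -> X2 -> C) (F : H2 fw) : H1 fw -> C :=
  fun phi => b (r1 phi) (r2 F).

Definition preTr2 (f : D2h fw) : H2 fw := choice_of 0 (fun F => Tr2 F = f).

Definition DL (X1 X2 : lmodType C) (r1 : H1 fw -> X1) (r2 : H2 fw -> X2)
    (b : X1 -> X2 -> C) (f : D2h fw) : X2 :=
  let F := preTr2 f in - r2 F + r2 (PiL (L1 r1 r2 b F)).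

Definition TrDL (X1 X2 : Type) (r1 : H1 fw -> X1) (r2 : H2 fw -> X2)
    (b : X1 -> X2 -> C) (f : D2h fw) : D2h fw :=
  let F := preTr2 f in - Tr2 F + Tr2 (PiL (L1 r1 r2 b F)).

(* TrO : \hat H_2^O -> \hat D_2 induces a bounded operator H_2^O -> D_2 with
   Tr_2 F = TrO (F|_O) (in D_2) for all F in H_2 *)
Definition is_partial_trace (X2 : lmodType C) (r2 : H2 fw -> X2) (TrO : X2 -> D2h fw) : Prop :=
  [/\ forall F, exists G, Tr2 G = TrO (r2 F),
      forall (a : C) F G, qeq hn2 (@Tr2 fw) (TrO (r2 (a *: F + G))) (a *: TrO (r2 F) + TrO (r2 G)),
      exists M : R, forall F, qnorm hn2 (@Tr2 fw) (TrO (r2 F)) <= M * qnorm hn2 r2 (r2 F) &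
      forall F, qeq hn2 (@Tr2 fw) (Tr2 F) (TrO (r2 F))].

End Framework.

(* The potentials are well defined because B satisfies the inf-sup conditions:
   by the Banach-Necas-Babuska theorem, a consequence of the Riesz representation
   and projection theorems, B(., u) = H has exactly one solution u in H_2 for
   every bounded linear form H on H_1.
   The rest comes from the splitting B = B^Omega + B^C.  For any F, the Newton
   potentials Pi^L(L(1_Omega F)) and Pi^L(L(1_C F)) add up to a solution of
   B(., u) = B(., F), hence to F; taking traces gives the first identity, and
   testing against phi gives the jump of the Neumann traces of the double layers.
   The gluing axiom (iii) makes the Neumann traces well defined: for phi with
   Tr_1 phi = 0 it provides w equal to phi on Omega, to 0 on C, and with
   Tr_1 w = 0, so if B(w, u) = B^Omega(w|_Omega, v|_Omega) + l(Tr_1 w) for all w,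
   then (L(u - v))|_Omega = 0.  The last identity holds for every u in H_2, as
   both partial traces of u agree with Tr_2 u. *)

From Pilot Require Import Defs.
From mathcomp Require Import all_boot all_order all_algebra.
From mathcomp Require Import complex.
From mathcomp Require Import classical_sets boolp reals.
From mathcomp Require Import ring lra.
From Stdlib Require Import ClassicalEpsilon.
Set Implicit Arguments.
Unset Strict Implicit.
Unset Printing Implicit Defensive.

Import Order.TTheory GRing.Theory Num.Theory.
Local Open Scope ring_scope.
Local Open Scope classical_set_scope.

Section RealFacts.
Variable R : realType.

Lemma eventually_div_succ_lt (K e : R) :
  0 < e -> exists N : nat, forall n, (N <= n)%N -> K / n.+1%:R < e.
Proof.
move=> e0; exists (Num.bound (`|K| / e)) => n hn.
have hb := archi_boundP (divr_ge0 (normr_ge0 K) (ltW e0)).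
have : `|K| / e < n.+1%:R.
  by apply: lt_le_trans hb _; rewrite ler_nat; apply: leq_trans hn _.
rewrite ltr_pdivrMr // ltr_pdivrMr ?ltr0Sn // mulrC => h.
exact: le_lt_trans (ler_norm K) h.
Qed.

Lemma ge_sup_nneg (E : set R) c : 0 <= c -> (forall x, E x -> x <= c) -> sup E <= c.
Proof.
move=> c0 ub; have [[x Ex]|E0] := pselect (exists x, E x).
  by apply: ge_sup => //; exists x.
suff -> : E = set0 by rewrite sup0.
by apply/seteqP; split => y // Ey; case: E0; exists y.
Qed.

Lemma pos_bound (T : Type) (f g : T -> R) : (forall x, 0 <= g x) ->
  (exists K, forall x, f x <= K * g x) -> exists2 K, 0 < K & forall x, f x <= K * g x.
Proof.
move=> g0 [K hK]; exists (`|K| + 1) => [|x]; first by rewrite ltr_pwDr.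
apply: le_trans (hK x) (ler_wpM2r (g0 x) _).
by apply: le_trans (ler_norm K) _; rewrite lerDl.
Qed.

End RealFacts.

Section ComplexModulus.
Variable R : realType.
Local Notation C := R[i].

Lemma cmodE (z : C) : `|z| = (cmod z)%:C%C.
Proof. by case: z => a b; rewrite normc_def. Qed.

Lemma cmod_ge0 (z : C) : 0 <= cmod z.
Proof. by rewrite -ler0c -cmodE. Qed.

Lemma cmod_le0 (z : C) : cmod z <= 0 -> z = 0.
Proof. by rewrite -lecR -cmodE normr_le0 => /eqP. Qed.

Lemma cmod0 : cmod (0 : C) = 0.
Proof. by apply: complexI; rewrite -cmodE normr0. Qed.

Lemma cmod_real (r : R) : cmod r%:C%C = `|r|.
Proof. by rewrite /cmod /= expr0n /= addr0 sqrtr_sqr. Qed.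

Lemma crealD (z w : C) : creal (z + w) = creal z + creal w.
Proof. by case: z; case: w. Qed.

Lemma creal_addC_le (z : C) : creal (z + z^*) <= 2 * cmod z.
Proof.
case: z => a b; rewrite /cmod /=.
have : a <= Num.sqrt (a ^+ 2 + b ^+ 2).
  apply: le_trans (ler_norm a) _.
  by rewrite -sqrtr_sqr ler_sqrt ?addr_ge0 ?sqr_ge0 // lerDl sqr_ge0.
lra.
Qed.

End ComplexModulus.

Definition is_linear_form (R : realType) (V : lmodType R[i]) (l : V -> R[i]) : Prop :=
  forall a x y, l (a *: x + y) = a * l x + l y.

Section CombinationLinearity.
Variables (R : realType) (V : lmodType R[i]) (W : zmodType).
Variables (s : R[i] -> W -> W) (f : V -> W).
Hypothesis sN1 : forall w, s (-1) w = - w.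
Hypothesis f_comb : forall a x y, f (a *: x + y) = s a (f x) + f y.

Lemma comb_linB x y : f (x - y) = f x - f y.
Proof. by rewrite -scaleN1r addrC f_comb sN1 addrC. Qed.

Lemma comb_lin0 : f 0 = 0.
Proof. by have := comb_linB 0 0; rewrite !subrr. Qed.

Lemma comb_linN x : f (- x) = - f x.
Proof. by have := comb_linB 0 x; rewrite comb_lin0 !sub0r. Qed.

Lemma comb_linD x y : f (x + y) = f x + f y.
Proof. by have := comb_linB x (- y); rewrite opprK comb_linN opprK. Qed.

Lemma comb_linZ a x : f (a *: x) = s a (f x).
Proof. by rewrite -[a *: x]addr0 f_comb comb_lin0 addr0. Qed.

End CombinationLinearity.

Section LinearMaps.
Variables (R : realType) (V W : lmodType R[i]).

Section Map.
Variables (T : V -> W) (hT : is_linear T).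

Lemma is_linearB x y : T (x - y) = T x - T y.
Proof. exact: comb_linB (@scaleN1r _ W) hT x y. Qed.

Lemma is_linear0 : T 0 = 0.
Proof. exact: comb_lin0 (@scaleN1r _ W) hT. Qed.

Lemma is_linearN x : T (- x) = - T x.
Proof. exact: comb_linN (@scaleN1r _ W) hT x. Qed.

Lemma is_linearD x y : T (x + y) = T x + T y.
Proof. exact: comb_linD (@scaleN1r _ W) hT x y. Qed.

End Map.

Section Form.
Variables (l : V -> R[i]) (hl : is_linear_form l).

Lemma is_linear_formB x y : l (x - y) = l x - l y.
Proof. exact: comb_linB (@mulN1r R[i]) hl x y. Qed.

Lemma is_linear_form0 : l 0 = 0.
Proof. exact: comb_lin0 (@mulN1r R[i]) hl. Qed.

Lemma is_linear_formD x y : l (x + y) = l x + l y.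
Proof. exact: comb_linD (@mulN1r R[i]) hl x y. Qed.

Lemma is_linear_formZ a x : l (a *: x) = a * l x.
Proof. exact: comb_linZ (@mulN1r R[i]) hl a x. Qed.

End Form.

End LinearMaps.

Definition ip_cvg (R : realType) (V : lmodType R[i]) (ip : V -> V -> R[i])
    (u : nat -> V) (l : V) : Prop :=
  forall e : R, 0 < e -> exists N, forall n, (N <= n)%N -> ipnorm ip (u n - l) < e.

Definition ip_cauchy (R : realType) (V : lmodType R[i]) (ip : V -> V -> R[i])
    (u : nat -> V) : Prop :=
  forall e : R, 0 < e -> exists N, forall m n, (N <= m)%N -> (N <= n)%N ->
    ipnorm ip (u m - u n) < e.

Definition bounded_form (R : realType) (V : lmodType R[i]) (ip : V -> V -> R[i])
    (l : V -> R[i]) : Prop :=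
  exists K, forall x, cmod (l x) <= K * ipnorm ip x.

Section InnerProduct.
Variables (R : realType) (V : lmodType R[i]) (ip : V -> V -> R[i]).
Hypothesis hV : is_hilbert ip.
Local Notation nrm := (ipnorm ip).

Lemma ip_linear_forml y : is_linear_form (ip ^~ y).
Proof. by case: hV => h _ _ _ _ a x x'; apply: h. Qed.

Lemma ipC x y : ip y x = (ip x y)^*.
Proof. by case: hV => _ h _ _ _; apply: h. Qed.

Lemma ipxx_ge0 x : 0 <= ip x x.
Proof. by case: hV => _ _ h _ _; apply: h. Qed.

Lemma ipxx_eq0 x : ip x x = 0 -> x = 0.
Proof. by case: hV => _ _ _ h _; apply: h. Qed.

Lemma hilbert_complete u : ip_cauchy ip u -> exists l, ip_cvg ip u l.
Proof. by case: hV => _ _ _ _ h; apply: h. Qed.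

Lemma ipDl x x' y : ip (x + x') y = ip x y + ip x' y.
Proof. exact: is_linear_formD (ip_linear_forml y) x x'. Qed.

Lemma ipBl x x' y : ip (x - x') y = ip x y - ip x' y.
Proof. exact: is_linear_formB (ip_linear_forml y) x x'. Qed.

Lemma ipZl a x y : ip (a *: x) y = a * ip x y.
Proof. exact: is_linear_formZ (ip_linear_forml y) a x. Qed.

Lemma ipDr x y y' : ip x (y + y') = ip x y + ip x y'.
Proof. by rewrite ipC ipDl rmorphD (ipC y x) (ipC y' x). Qed.

Lemma ipBr x y y' : ip x (y - y') = ip x y - ip x y'.
Proof. by rewrite ipC ipBl rmorphB (ipC y x) (ipC y' x). Qed.

Lemma ipZr a x y : ip x (a *: y) = a^* * ip x y.
Proof. by rewrite ipC ipZl rmorphM (ipC y x). Qed.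

Lemma ip0r x : ip x 0 = 0.
Proof. by rewrite -(scale0r 0) ipZr rmorph0 mul0r. Qed.

Lemma nrm_ge0 x : 0 <= nrm x.
Proof. exact: sqrtr_ge0. Qed.

Lemma ipxx_real x : ip x x = (creal (ip x x))%:C%C.
Proof.
by have := ipxx_ge0 x; case: (ip x x) => a b; rewrite lecE /= => /andP[/eqP -> _].
Qed.

Lemma nrm_sqrE x : nrm x ^+ 2 = creal (ip x x).
Proof. by rewrite sqr_sqrtr // -lecR -ipxx_real ipxx_ge0. Qed.

Lemma ipxxE x : ip x x = (nrm x ^+ 2)%:C%C.
Proof. by rewrite nrm_sqrE -ipxx_real. Qed.

Lemma nrm0 : nrm 0 = 0.
Proof. by rewrite /ipnorm ip0r sqrtr0. Qed.

Lemma nrm_eq0 x : nrm x = 0 -> x = 0.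
Proof. by move=> h; apply: ipxx_eq0; rewrite ipxxE h expr0n. Qed.

Lemma nrmN x : nrm (- x) = nrm x.
Proof. by rewrite /ipnorm -scaleN1r ipZl ipZr rmorphN1 !mulN1r opprK. Qed.

Lemma nrmB x y : nrm (x - y) = nrm (y - x).
Proof. by rewrite -nrmN opprB. Qed.

Lemma nrmZ a x : nrm (a *: x) = cmod a * nrm x.
Proof.
apply/eqP; rewrite -(@eqrXn2 _ 2) ?mulr_ge0 ?cmod_ge0 ?nrm_ge0 //; apply/eqP.
apply: complexI; rewrite -ipxxE exprMn rmorphM /= -ipxxE ipZl ipZr rmorphXn /=.
by rewrite -cmodE normCK mulrA.
Qed.

Lemma ip_sub_proj x y : ip y y != 0 ->
  ip (x - (ip x y / ip y y) *: y) (x - (ip x y / ip y y) *: y) =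
  ip x x - `|ip x y| ^+ 2 / ip y y.
Proof.
move=> yy0; have yyC : (ip y y)^* = ip y y := geC0_conj (ipxx_ge0 y).
have tC : (ip x y / ip y y)^* = (ip x y)^* / ip y y.
  by rewrite rmorphM fmorphV; congr (_ * _^-1).
by rewrite !(ipBl, ipBr, ipZl, ipZr) tC normCK (ipC x y); field.
Qed.

Lemma cauchy_schwarz x y : cmod (ip x y) <= nrm x * nrm y.
Proof.
have [yy0|yy0] := eqVneq (ip y y) 0.
  by rewrite (ipxx_eq0 yy0) ip0r cmod0 mulr_ge0 ?nrm_ge0.
have yy_gt0 : 0 < ip y y by rewrite lt_def yy0 ipxx_ge0.
have := ipxx_ge0 (x - (ip x y / ip y y) *: y); rewrite ip_sub_proj //.
rewrite subr_ge0 ler_pdivrMr // cmodE -rmorphXn !ipxxE -rmorphM lecR => h.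
rewrite -(@ler_pXn2r _ 2) ?nnegrE ?mulr_ge0 ?nrm_ge0 ?cmod_ge0 //.
by rewrite exprMn.
Qed.

Lemma nrmD_le x y : nrm (x + y) <= nrm x + nrm y.
Proof.
rewrite -(@ler_pXn2r _ 2) ?nnegrE ?addr_ge0 ?nrm_ge0 // sqrrD !nrm_sqrE.
rewrite ipDl !ipDr (ipC x y) !crealD.
have := creal_addC_le (ip x y); rewrite crealD.
have := cauchy_schwarz x y; lra.
Qed.

Lemma parallelogram x y :
  nrm (x + y) ^+ 2 + nrm (x - y) ^+ 2 = 2 * (nrm x ^+ 2 + nrm y ^+ 2).
Proof.
apply: complexI; rewrite mulr_natl mulr2n !rmorphD /= -!ipxxE.
by rewrite ipBl !ipBr ipDl !ipDr; ring.
Qed.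

Lemma ip_inj r r' : (forall x, ip x r = ip x r') -> r = r'.
Proof.
move=> h; apply/eqP; rewrite -subr_eq0; apply/eqP; apply: ipxx_eq0.
by rewrite ipBr h subrr.
Qed.

End InnerProduct.

Section Projection.
Variables (R : realType) (V : lmodType R[i]) (ip : V -> V -> R[i]).
Hypothesis hV : is_hilbert ip.
Local Notation nrm := (ipnorm ip).

Variable M : V -> Prop.
Hypothesis M0 : M 0.
Hypothesis MD : forall x y, M x -> M y -> M (x + y).
Hypothesis MZ : forall a x, M x -> M (a *: x).
Hypothesis M_closed : forall u l, (forall n, M (u n)) -> ip_cvg ip u l -> M l.

Lemma minimizer_orthogonal x p : M p -> (forall m, M m -> nrm (x - p) <= nrm (x - m)) ->
  forall m, M m -> ip (x - p) m = 0.
Proof.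
move=> Mp p_min m Mm.
have [mm0|mm0] := eqVneq (ip m m) 0; first by rewrite (ipxx_eq0 hV mm0) (ip0r hV).
have mm_gt0 : 0 < ip m m by rewrite lt_def mm0 (ipxx_ge0 hV).
have := p_min _ (MD Mp (MZ (ip (x - p) m / ip m m) Mm)).
rewrite opprD addrA -(@ler_pXn2r _ 2) ?nnegrE ?nrm_ge0 //.
rewrite -lecR -!(ipxxE hV) (ip_sub_proj hV) // lerDl oppr_ge0 pmulr_lle0 ?invr_gt0 //.
by rewrite -normrX normr_le0 expf_eq0 /= => /eqP.
Qed.

Section Minimizer.
Variable x : V.
Let d := inf [set nrm (x - m) | m in M].

Lemma dist_le m : M m -> d <= nrm (x - m).
Proof.
move=> Mm; apply: ge_inf; last by exists m.
by exists 0 => _ [m' _ <-]; apply: nrm_ge0.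
Qed.

Lemma dist_ge0 : 0 <= d.
Proof. by apply: lb_le_inf => [|_ [m _ <-]]; [exists (nrm (x - 0)), 0 | apply: nrm_ge0]. Qed.

Lemma dist_approx e : 0 < e -> exists2 m, M m & nrm (x - m) < d + e.
Proof.
move=> e0; have : d < d + e by rewrite ltrDl.
by case/inf_lt => [|_ [m Mm <-]]; [exists (nrm (x - 0)), 0 | exists m].
Qed.

Lemma dist_parallelogram m m' : M m -> M m' ->
  nrm (m - m') ^+ 2 <= 2 * nrm (x - m) ^+ 2 + 2 * nrm (x - m') ^+ 2 - 4 * d ^+ 2.
Proof.
move=> Mm Mm'; pose h := 2^-1 *: (m + m').
have mid : (x - m) + (x - m') = 2 *: (x - h).
  rewrite scalerBr /h scalerA mulfV ?pnatr_eq0 // scale1r scaler_nat mulr2n.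
  by rewrite opprD addrACA.
have diff : (x - m) - (x - m') = m' - m by rewrite opprB addrC addrA subrK.
have two : cmod (2 : R[i]) = 2.
  by rewrite -(rmorph_nat (real_complex R) 2) cmod_real normr_nat.
have := parallelogram hV (x - m) (x - m').
rewrite mid diff (nrmZ hV) (nrmB hV m') two.
have : d ^+ 2 <= nrm (x - h) ^+ 2.
  by rewrite ler_pXn2r ?nnegrE ?nrm_ge0 ?dist_ge0 ?dist_le //; apply/MZ/MD.
lra.
Qed.

Lemma minimizing_cauchy u : (forall n, M (u n)) ->
  (forall n, nrm (x - u n) < d + n.+1%:R^-1) -> ip_cauchy ip u.
Proof.
move=> Mu u_min e e0.
have [N hN] := eventually_div_succ_lt (8 * d + 4) (mulr_gt0 e0 e0).
exists N => m n hm hn.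
rewrite -(@ltr_pXn2r _ 2) ?nnegrE ?nrm_ge0 ?(ltW e0) //.
pose eps k : R := k.+1%:R^-1.
have eps_gt0 k : 0 < eps k by rewrite invr_gt0 ltr0Sn.
have eps_le k : (N <= k)%N -> eps k <= eps N.
  by move=> hk; rewrite lef_pV2 ?posrE ?ltr0Sn // ler_nat ltnS.
have eps_le1 k : eps k <= 1 by rewrite invr_le1 ?ler1n ?unitfE ?pnatr_eq0.
have sq_le k : nrm (x - u k) ^+ 2 <= (d + eps k) ^+ 2.
  rewrite ler_pXn2r ?nnegrE ?nrm_ge0 ?addr_ge0 ?dist_ge0 ?(ltW (eps_gt0 k)) //.
  exact: ltW (u_min k).
(* By [dist_parallelogram], |u m - u n|^2 is at most
   4 d (eps m + eps n) + 2 (eps m ^ 2 + eps n ^ 2) <= (8 d + 4) eps N. *)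
have := dist_parallelogram (Mu m) (Mu n).
have := hN N (leqnn N); rewrite -/(eps N) => hNe.
have := sq_le m; have := sq_le n.
have := eps_le _ hm; have := eps_le _ hn; have := eps_le1 m; have := eps_le1 n.
have := eps_gt0 m; have := eps_gt0 n; have := dist_ge0.
move: (eps m) (eps n) (eps N) hNe => a b c hNe.
nra.
Qed.

Lemma exists_minimizer : exists2 p, M p & forall m, M m -> nrm (x - p) <= nrm (x - m).
Proof.
have [u hu] : exists u : nat -> V, forall n, M (u n) /\ nrm (x - u n) < d + n.+1%:R^-1.
  apply: (choice (fun n m => M m /\ nrm (x - m) < d + n.+1%:R^-1)) => n.
  have n_gt0 : 0 < n.+1%:R^-1 :> R by rewrite invr_gt0.
  by have [m Mm hm] := dist_approx n_gt0; exists m.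
have Mu n := (hu n).1.
have [p up] := hilbert_complete hV (minimizing_cauchy Mu (fun n => (hu n).2)).
exists p => [|m Mm]; first exact: M_closed up.
apply: le_trans (dist_le Mm); apply/ler_addgt0Pr => e e0.
have e2 : 0 < e / 2 by rewrite divr_gt0.
have [N1 h1] := up _ e2; have [N2 h2] := eventually_div_succ_lt 1 e2.
pose n := maxn N1 N2.
have -> : x - p = (x - u n) + (u n - p) by rewrite addrA subrK.
apply: le_trans (nrmD_le hV _ _) _.
have := h1 n (leq_maxl _ _); have := h2 n (leq_maxr _ _); have := (hu n).2.
rewrite mul1r; move: (n.+1%:R^-1) => q; lra.
Qed.

End Minimizer.

Theorem projection x : exists2 p, M p & forall m, M m -> ip (x - p) m = 0.
Proof.
have [p Mp p_min] := exists_minimizer x.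
by exists p => //; apply: minimizer_orthogonal.
Qed.

End Projection.

Section Riesz.
Variables (R : realType) (V : lmodType R[i]) (ip : V -> V -> R[i]).
Hypothesis hV : is_hilbert ip.
Variable l : V -> R[i].
Hypotheses (l_lin : is_linear_form l) (l_bounded : bounded_form ip l).

Lemma bounded_form_kernel_closed u z :
  (forall n, l (u n) = 0) -> ip_cvg ip u z -> l z = 0.
Proof.
move=> lu uz; have [K K0 hK] := pos_bound (@nrm_ge0 _ _ ip) l_bounded.
apply: cmod_le0; apply/ler_addgt0Pr => e e0; rewrite add0r.
have [N hN] := uz (e / K) (divr_gt0 e0 K0).
have -> : l z = l (z - u N) by rewrite is_linear_formB // lu subr0.
apply: le_trans (hK _) _; rewrite (nrmB hV) mulrC -ler_pdivlMr //.
exact: ltW (hN N (leqnn N)).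
Qed.

Theorem riesz_representation : exists r, forall x, l x = ip x r.
Proof.
have [[x0 lx0]|l0] := pselect (exists x0, l x0 != 0); last first.
  exists 0 => x; rewrite (ip0r hV); apply/eqP; apply: contra_notT l0 => lx.
  by exists x.
have kerD x y : l x = 0 -> l y = 0 -> l (x + y) = 0.
  by move=> lx ly; rewrite is_linear_formD // lx ly addr0.
have kerZ a x : l x = 0 -> l (a *: x) = 0.
  by move=> lx; rewrite is_linear_formZ // lx mulr0.
have [p lp p_orth] := projection hV (is_linear_form0 l_lin) kerD kerZ
  bounded_form_kernel_closed x0.
set z := x0 - p.
have lz : l z = l x0 by rewrite is_linear_formB // lp subr0.
have zz0 : ip z z != 0.
  by apply: contra lx0 => /eqP /(ipxx_eq0 hV) z0; rewrite -lz z0 is_linear_form0.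
have zzC : (ip z z)^* = ip z z := geC0_conj (ipxx_ge0 hV z).
exists (((l z)^* / ip z z) *: z) => x.
have : ip (x - (l x / l z) *: z) z = 0.
  rewrite ipC // p_orth ?rmorph0 // is_linear_formB // is_linear_formZ //.
  by rewrite mulfVK ?lz // subrr.
rewrite (ipBl hV) (ipZl hV) => /eqP; rewrite subr_eq0 => /eqP xz.
have rC : ((l z)^* / ip z z)^* = l z / ip z z.
  by rewrite rmorphM /= conjCK fmorphV; congr (_ * _^-1).
rewrite (ipZr hV) xz rC; field.
by rewrite zz0 lz lx0.
Qed.

End Riesz.

Section InfSup.
Variables (R : realType) (V W : lmodType R[i]).
Variables (ipV : V -> V -> R[i]) (ipW : W -> W -> R[i]).
Hypotheses (hV : is_hilbert ipV) (hW : is_hilbert ipW).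
Local Notation nV := (ipnorm ipV).
Local Notation nW := (ipnorm ipW).
Variable b : V -> W -> R[i].
Hypothesis b_linl : forall y, is_linear_form (b ^~ y).
Hypothesis b_linr : forall x, is_linear_form (b x).
Hypothesis b_bounded : exists M, forall x y, cmod (b x y) <= M * nV x * nW y.
Variable lam : R.
Hypothesis lam_gt0 : 0 < lam.
Hypothesis infsup_r : forall v,
  lam * nW v <= sup [set cmod (b w v) / nV w | w in [set w : V | w != 0]].
Hypothesis infsup_l : forall u,
  lam * nV u <= sup [set cmod (b u w) / nW w | w in [set w : W | w != 0]].

Lemma infsup_bound_r v c : 0 <= c -> (forall w, cmod (b w v) <= c * nV w) ->
  lam * nW v <= c.
Proof.
move=> c0 hc; apply: le_trans (infsup_r v) (ge_sup_nneg c0 _) => _ [w /= w0 <-].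
have w_gt0 : 0 < nV w.
  by rewrite lt_def nrm_ge0 andbT; apply: contra w0 => /eqP /(nrm_eq0 hV) ->.
by rewrite ler_pdivrMr.
Qed.

Lemma infsup_bound_l u c : 0 <= c -> (forall w, cmod (b u w) <= c * nW w) ->
  lam * nV u <= c.
Proof.
move=> c0 hc; apply: le_trans (infsup_l u) (ge_sup_nneg c0 _) => _ [w /= w0 <-].
have w_gt0 : 0 < nW w.
  by rewrite lt_def nrm_ge0 andbT; apply: contra w0 => /eqP /(nrm_eq0 hW) ->.
by rewrite ler_pdivrMr.
Qed.

Lemma infsup_unique_r v : (forall w, b w v = 0) -> v = 0.
Proof.
move=> bv; apply: (nrm_eq0 hW); apply/eqP; rewrite eq_le nrm_ge0 andbT.
rewrite -(pmulr_rle0 _ lam_gt0); apply: infsup_bound_r => // w.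
by rewrite bv cmod0 !mul0r.
Qed.

Lemma infsup_unique_l u : (forall w, b u w = 0) -> u = 0.
Proof.
move=> bu; apply: (nrm_eq0 hV); apply/eqP; rewrite eq_le nrm_ge0 andbT.
rewrite -(pmulr_rle0 _ lam_gt0); apply: infsup_bound_l => // w.
by rewrite bu cmod0 !mul0r.
Qed.

Lemma b_bounded_pos : exists2 K, 0 < K & forall x y, cmod (b x y) <= K * nV x * nW y.
Proof.
have [M hM] := b_bounded; exists (`|M| + 1) => [|x y]; first by rewrite ltr_pwDr.
apply: le_trans (hM x y) _; rewrite -!mulrA ler_wpM2r ?mulr_ge0 ?nrm_ge0 //.
by apply: le_trans (ler_norm M) _; rewrite lerDl.
Qed.

Section Representer.
Variable T : W -> V.
Hypothesis T_rep : forall v w, b w v = ipV w (T v).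

Lemma rep_semilinear a v v' : T (a *: v + v') = a^* *: T v + T v'.
Proof.
apply: (ip_inj hV) => w.
by rewrite (ipDr hV) (ipZr hV) conjCK -!T_rep; apply: b_linr.
Qed.

Lemma rep0 : T 0 = 0.
Proof.
have := rep_semilinear 1 0 0; rewrite scaler0 addr0 rmorph1 scale1r.
by move/(congr1 (fun t => t - T 0)); rewrite subrr addrK.
Qed.

Lemma repB v v' : T (v - v') = T v - T v'.
Proof. by rewrite addrC -scaleN1r rep_semilinear rmorphN1 scaleN1r addrC. Qed.

Lemma rep_bounded : exists2 K, 0 < K & forall v, nV (T v) <= K * nW v.
Proof.
have [K K0 hK] := b_bounded_pos; exists K => // v.
have := hK (T v) v; rewrite T_rep (ipxxE hV) cmod_real (ger0_norm (sqr_ge0 _)).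
have [->|Tv0] := eqVneq (nV (T v)) 0; first by move=> _; rewrite mulr_ge0 ?nrm_ge0 ?ltW.
have Tv_gt0 : 0 < nV (T v) by rewrite lt_def Tv0 nrm_ge0.
by rewrite expr2 mulrAC ler_pM2r.
Qed.

Lemma rep_bounded_below v : lam * nW v <= nV (T v).
Proof.
by apply: infsup_bound_r; rewrite ?nrm_ge0 // => w; rewrite T_rep mulrC cauchy_schwarz.
Qed.

Lemma rep_range_closed u r : (forall n, exists v, u n = T v) -> ip_cvg ipV u r ->
  exists v, r = T v.
Proof.
move=> uT ur; have [vs hvs] := choice _ uT.
have vs_cauchy : ip_cauchy ipW vs.
  move=> e e0; have e_lam : 0 < e * lam / 2 by rewrite divr_gt0 ?mulr_gt0.
  have [N hN] := ur _ e_lam.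
  exists N => m n hm hn; rewrite -(ltr_pM2l lam_gt0) mulrC.
  have := rep_bounded_below (vs m - vs n); rewrite repB -!hvs.
  have := nrmD_le hV (u m - r) (r - u n); rewrite addrA subrK.
  have := hN m hm; have := hN n hn; rewrite (nrmB hV r); lra.
have [v vs_v] := hilbert_complete hW vs_cauchy.
have [K K0 hK] := rep_bounded.
exists v; apply/eqP; rewrite eq_sym -subr_eq0; apply/eqP; apply: (nrm_eq0 hV).
apply/eqP; rewrite eq_le nrm_ge0 andbT; apply/ler_addgt0Pr => e e0; rewrite add0r.
have e2 : 0 < e / 2 by rewrite divr_gt0.
have [N1 h1] := ur _ e2; have [N2 h2] := vs_v (e / 2 / K) (divr_gt0 e2 K0).
pose n := maxn N1 N2.
have -> : T v - r = T (v - vs n) + (u n - r) by rewrite repB hvs addrA subrK.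
apply: le_trans (nrmD_le hV _ _) _.
have := h1 n (leq_maxl _ _); have := h2 n (leq_maxr _ _); rewrite (nrmB hW) => hv.
have : K * nW (v - vs n) < e / 2 by rewrite mulrC -ltr_pdivlMr.
have := hK (v - vs n); lra.
Qed.

Lemma rep_solve l : is_linear_form l -> bounded_form ipV l ->
  exists u, forall w, b w u = l w.
Proof.
move=> l_lin l_bd; have [r0 hr0] := riesz_representation hV l_lin l_bd.
have range0 : exists v, 0 = T v by exists 0; rewrite rep0.
have rangeD x y : (exists v, x = T v) -> (exists v, y = T v) -> exists v, x + y = T v.
  by move=> [v ->] [v' ->]; exists (1 *: v + v'); rewrite rep_semilinear rmorph1 scale1r.
have rangeZ a x : (exists v, x = T v) -> exists v, a *: x = T v.
  by move=> [v ->]; exists (a^* *: v + 0); rewrite rep_semilinear rep0 addr0 conjCK.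
have [_ [u ->] orth] := projection hV range0 rangeD rangeZ rep_range_closed r0.
have r0u : r0 - T u = 0.
  by apply: infsup_unique_l => v; rewrite T_rep orth //; exists v.
by exists u => w; rewrite T_rep hr0; move/eqP: r0u; rewrite subr_eq0 => /eqP ->.
Qed.

End Representer.

Theorem bnb_exists l : is_linear_form l -> bounded_form ipV l ->
  exists u, forall w, b w u = l w.
Proof.
move=> l_lin l_bd; have [M hM] := b_bounded.
have rep v : exists r, forall w, b w v = ipV w r.
  have bd : bounded_form ipV (b ^~ v) by exists (M * nW v) => w; rewrite mulrAC hM.
  have [r hr] := riesz_representation hV (b_linl v) bd.
  by exists r.
have [T T_rep] := choice _ rep.
exact: (rep_solve T_rep l_lin l_bd).
Qed.

End InfSup.

Lemma choice_ofP (T : Type) (t0 : T) (P : T -> Prop) : (exists t, P t) -> P (choice_of t0 P).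
Proof. exact: epsilon_spec. Qed.

Section QuotientSeminorm.
Variables (R : realType) (V W : lmodType R[i]) (ip : V -> V -> R[i]).
Hypothesis hV : is_hilbert ip.
Variable T : V -> W.
Hypothesis T_lin : is_linear T.
Local Notation nrm := (ipnorm ip).
Local Notation q := (qnorm nrm T).

Lemma qnorm_ge0 w : 0 <= q w.
Proof.
have [[F TF]|nF] := pselect (exists F, T F = w).
  by apply: lb_le_inf => [|_ [G _ <-]]; [exists (nrm F), F | apply: nrm_ge0].
rewrite /qnorm; suff -> : [set nrm F | F in [set F | T F = w]] = set0 by rewrite inf0.
by apply/seteqP; split => // y [F TF _]; case: nF; exists F.
Qed.

Lemma qnorm_le F : q (T F) <= nrm F.
Proof. by apply: ge_inf; [exists 0 => _ [G _ <-]; apply: nrm_ge0 | exists F]. Qed.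

Lemma qnorm_lb c w : (exists F, T F = w) -> (forall F, T F = w -> c <= nrm F) -> c <= q w.
Proof.
move=> [F TF] hc; apply: lb_le_inf; first by exists (nrm F), F.
by move=> _ [G TG <-]; apply: hc.
Qed.

Lemma qnorm_approx w e : (exists F, T F = w) -> q w < e -> exists2 F, T F = w & nrm F < e.
Proof.
move=> [F TF]; case/inf_lt; first by exists (nrm F), F.
by move=> _ [G TG <-] hG; exists G.
Qed.

Lemma qnormB_le F G : q (T F - T G) <= q (T F) + q (T G).
Proof.
apply/ler_addgt0Pr => e e0; have e2 : 0 < e / 2 by rewrite divr_gt0.
have [F' TF' hF'] := qnorm_approx (ex_intro _ F erefl) (ltr_pwDr e2 (lexx (q (T F)))).
have [G' TG' hG'] := qnorm_approx (ex_intro _ G erefl) (ltr_pwDr e2 (lexx (q (T G)))).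
have -> : T F - T G = T (F' - G') by rewrite (is_linearB T_lin) TF' TG'.
apply: le_trans (qnorm_le _) _.
apply: le_trans (nrmD_le hV _ _) _; rewrite (nrmN hV); lra.
Qed.

Lemma qnorm0 : q 0 = 0.
Proof.
apply/eqP; rewrite eq_le qnorm_ge0 andbT.
by have := qnorm_le 0; rewrite (is_linear0 T_lin) (nrm0 hV).
Qed.

Lemma qeq_refl w : (exists F, T F = w) -> qeq nrm T w w.
Proof. by move=> hw; split => //; rewrite subrr qnorm0. Qed.

End QuotientSeminorm.

Section Framework.
Variables (R : realType) (fw : framework R).
Hypothesis hax : framework_axioms fw.
Local Notation C := R[i].
Local Notation B := (@Defs.B _ fw).
Local Notation Tr1 := (@Defs.Tr1 _ fw).
Local Notation Tr2 := (@Defs.Tr2 _ fw).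
Local Notation rO1 := (@Defs.rO1 _ fw).
Local Notation rC1 := (@Defs.rC1 _ fw).
Local Notation rO2 := (@Defs.rO2 _ fw).
Local Notation rC2 := (@Defs.rC2 _ fw).
Local Notation BO := (@Defs.BO _ fw).
Local Notation BC := (@Defs.BC _ fw).
Local Notation hn1 := (@Defs.hn1 _ fw).
Local Notation hn2 := (@Defs.hn2 _ fw).
Local Notation ip1 := (@Defs.ip1 _ fw).
Local Notation ip2 := (@Defs.ip2 _ fw).

Let hilb1 := ax_hilbert1 hax.
Let hilb2 := ax_hilbert2 hax.
Let Tr1_lin : is_linear Tr1 := (ax_Tr1 hax).1.
Let Tr2_lin : is_linear Tr2 := (ax_Tr2 hax).1.
Let rO1_lin : is_linear rO1 := (ax_rO1 hax).1.
Let rC1_lin : is_linear rC1 := (ax_rC1 hax).1.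
Let rO2_lin : is_linear rO2 := (ax_rO2 hax).1.
Let rC2_lin : is_linear rC2 := (ax_rC2 hax).1.

Lemma B_linr phi : is_linear_form (B phi).
Proof. by case: (ax_B hax) => _ h _ a; apply: h. Qed.

Lemma newton_solvable l : is_linear_form l -> bounded_form ip1 l ->
  exists u, forall phi, B phi u = l phi.
Proof.
move=> l_lin l_bd; have [hl _ hM] := ax_B hax.
exact: (bnb_exists hilb1 hilb2 (fun y a x x' => hl a x x' y) B_linr hM (ax_lam hax)
  (ax_infsup1 hax) (ax_infsup2 hax) l_lin l_bd).
Qed.

Lemma newton_unique v : (forall phi, B phi v = 0) -> v = 0.
Proof. exact: (infsup_unique_r hilb1 hilb2 (ax_lam hax) (ax_infsup1 hax)). Qed.

Lemma PiL_spec l : is_linear_form l -> bounded_form ip1 l ->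
  forall phi, B phi (PiL l) = l phi.
Proof. by move=> hl hb; apply: (choice_ofP _ (newton_solvable hl hb)). Qed.

Lemma SL_spec (g : D1h fw -> C) : in_N2 g -> forall phi, B phi (SL g) = g (Tr1 phi).
Proof.
move=> [g_lin [M hM]].
have g_bd : bounded_form ip1 (g \o Tr1).
  exists `|M| => phi; apply: le_trans (hM phi) _.
  apply: le_trans (ler_wpM2r (qnorm_ge0 _ _ _) (ler_norm M)) _.
  by rewrite ler_wpM2l ?normr_ge0 ?qnorm_le.
exact: (choice_ofP _ (newton_solvable (fun a x y => g_lin a x y) g_bd)).
Qed.

Lemma preTr2_spec (f : D2h fw) : (exists F, Tr2 F = f) -> Tr2 (@preTr2 _ fw f) = f.
Proof. exact: choice_ofP. Qed.

(* [b] stands for B^Omega or B^C, and [r1], [r2] for the matching restrictions. *)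
Section Piece.
Variables (X1 X2 : lmodType C) (r1 : Defs.H1 fw -> X1) (r2 : Defs.H2 fw -> X2).
Variable b : X1 -> X2 -> C.
Hypothesis r1_lin : is_linear r1.
Hypothesis b_bil : is_bounded_bilinear_on r1 r2 (qnorm hn1 r1) (qnorm hn2 r2) b.

Lemma piece_linl y : is_linear_form (fun phi => b (r1 phi) (r2 y)).
Proof. by case: b_bil => h _ _ a x x'; apply: h. Qed.

Lemma piece_linr phi : is_linear_form (fun y => b (r1 phi) (r2 y)).
Proof. by case: b_bil => _ h _ a y y'; apply: h. Qed.

Lemma pieceBl x x' y : b (r1 (x - x')) (r2 y) = b (r1 x) (r2 y) - b (r1 x') (r2 y).
Proof. exact: (is_linear_formB (piece_linl y)). Qed.

Lemma piece0l y : b (r1 0) (r2 y) = 0.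
Proof. exact: (is_linear_form0 (piece_linl y)). Qed.

Lemma piece0r x : b (r1 x) (r2 0) = 0.
Proof. exact: (is_linear_form0 (piece_linr x)). Qed.

Lemma pieceDr x y y' : b (r1 x) (r2 (y + y')) = b (r1 x) (r2 y) + b (r1 x) (r2 y').
Proof. exact: (is_linear_formD (piece_linr x)). Qed.

Lemma pieceBr x y y' : b (r1 x) (r2 (y - y')) = b (r1 x) (r2 y) - b (r1 x) (r2 y').
Proof. exact: (is_linear_formB (piece_linr x)). Qed.

Lemma piece_bounded y : bounded_form ip1 (fun phi => b (r1 phi) (r2 y)).
Proof.
have [_ _ [M hM]] := b_bil; exists (`|M| * qnorm hn2 r2 (r2 y)) => phi.
apply: le_trans (hM phi y) _; rewrite mulrAC.
have q2 := qnorm_ge0 ip2 r2 (r2 y); have q1 := qnorm_ge0 ip1 r1 (r1 phi).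
apply: (@le_trans _ _ (`|M| * qnorm hn2 r2 (r2 y) * qnorm hn1 r1 (r1 phi))).
  by rewrite !ler_wpM2r ?ler_norm.
by rewrite ler_wpM2l ?mulr_ge0 ?normr_ge0 ?qnorm_le.
Qed.

Lemma piece_qeq w phi y : qeq hn1 r1 (r1 w) (r1 phi) ->
  b (r1 w) (r2 y) = b (r1 phi) (r2 y).
Proof.
case=> _ _; rewrite -(is_linearB r1_lin) => q0.
have [_ _ [M hM]] := b_bil; apply/eqP; rewrite -subr_eq0 -pieceBl; apply/eqP.
by apply: cmod_le0; have := hM (w - phi) y; rewrite q0 mulr0 mul0r.
Qed.

Lemma newton_piece F phi : B phi (PiL (L1 r1 r2 b F)) = b (r1 phi) (r2 F).
Proof. exact: PiL_spec (piece_linl F) (piece_bounded F) phi. Qed.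

Definition neumann_free (y : Defs.H2 fw) : Prop :=
  forall phi, Tr1 phi = 0 -> b (r1 phi) (r2 y) = 0.

Lemma neumann_functional y : neumann_free y ->
  exists m, in_N2 m /\ forall phi, m (Tr1 phi) = b (r1 phi) (r2 y).
Proof.
move=> y_free; pose m d := b (r1 (choice_of 0 (fun phi => Tr1 phi = d))) (r2 y).
have mE phi : m (Tr1 phi) = b (r1 phi) (r2 y).
  have := @choice_ofP _ 0 (fun psi => Tr1 psi = Tr1 phi) (ex_intro _ phi erefl).
  move=> Tr_eq; apply/eqP; rewrite -subr_eq0 -pieceBl; apply/eqP; apply: y_free.
  by rewrite (is_linearB Tr1_lin) Tr_eq subrr.
exists m; split => //; split => [a phi psi|]; first by rewrite !mE; apply: piece_linl.
have [K K0 hK] := pos_bound (@nrm_ge0 _ _ ip1) (piece_bounded y).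
exists K => phi; rewrite mulrC -ler_pdivrMr //; apply: qnorm_lb; first by exists phi.
by move=> psi <-; rewrite ler_pdivrMr // mE mulrC hK.
Qed.

Lemma Mneu_spec y : neumann_free y ->
  forall phi, Mneu r1 b (r2 y) (Tr1 phi) = b (r1 phi) (r2 y).
Proof. by move=> y_free; have [] := choice_ofP (fun _ => 0) (neumann_functional y_free). Qed.

Section Complement.
Variables (Y1 Y2 : lmodType C) (s1 : Defs.H1 fw -> Y1) (s2 : Defs.H2 fw -> Y2).
Variable b' : Y1 -> Y2 -> C.
Hypothesis B_split : forall u v, B u v = b (r1 u) (r2 v) + b' (s1 u) (s2 v).
Hypothesis glue : forall phi, Tr1 phi = 0 -> exists w,
  [/\ qeq hn1 r1 (r1 w) (r1 phi), forall y, b' (s1 w) (s2 y) = 0 &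
       qnorm hn1 Tr1 (Tr1 w) = 0].

Lemma neumann_free_of_solution u v (l : D1h fw -> C) :
  (forall w, qnorm hn1 Tr1 (Tr1 w) = 0 -> l (Tr1 w) = 0) ->
  (forall phi, B phi u = b (r1 phi) (r2 v) + l (Tr1 phi)) -> neumann_free (u - v).
Proof.
move=> l_null u_sol psi psi0; have [w [w_psi w_s w0]] := glue psi0.
have := u_sol w; rewrite B_split w_s addr0 (l_null _ w0) addr0.
by rewrite (piece_qeq u w_psi) (piece_qeq v w_psi) => e; rewrite pieceBr e subrr.
Qed.

End Complement.

End Piece.

Let BO_bil := ax_BO hax.
Let BC_bil := ax_BC hax.

Lemma Tr1_null_qeq phi : Tr1 phi = 0 ->
  qeq hn1 Tr1 (Tr1 phi) (Tr1 0) /\ qeq hn1 Tr1 (Tr1 0) (Tr1 phi).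
Proof.
move=> phi0; have q00 : qeq hn1 Tr1 0 0.
  by apply: (qeq_refl hilb1 Tr1_lin); exists 0; apply: is_linear0 Tr1_lin.
by rewrite phi0 (is_linear0 Tr1_lin).
Qed.

Lemma glue_Omega phi : Tr1 phi = 0 -> exists w,
  [/\ qeq hn1 rO1 (rO1 w) (rO1 phi), forall y, BC (rC1 w) (rC2 y) = 0 &
       qnorm hn1 Tr1 (Tr1 w) = 0].
Proof.
move=> phi0; have [w [wO wC [_ _ wTr]]] := ax_glue1 hax (Tr1_null_qeq phi0).1.
exists w; split => // [y|]; last by rewrite phi0 subr0 in wTr.
by rewrite (piece_qeq rC1_lin BC_bil y wC) (piece0l BC_bil).
Qed.

Lemma glue_C phi : Tr1 phi = 0 -> exists w,
  [/\ qeq hn1 rC1 (rC1 w) (rC1 phi), forall y, BO (rO1 w) (rO2 y) = 0 &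
       qnorm hn1 Tr1 (Tr1 w) = 0].
Proof.
move=> phi0; have [w [wO wC [_ _ wTr]]] := ax_glue1 hax (Tr1_null_qeq phi0).2.
exists w; split => // [y|]; last by rewrite (is_linear0 Tr1_lin) subr0 in wTr.
by rewrite (piece_qeq rO1_lin BO_bil y wO) (piece0l BO_bil).
Qed.

Lemma B_splitC (u : Defs.H1 fw) (v : Defs.H2 fw) :
  B u v = BC (rC1 u) (rC2 v) + BO (rO1 u) (rO2 v).
Proof. by rewrite addrC; apply: ax_split. Qed.

Lemma newton_pieces_sum F :
  PiL (L1 rO1 rO2 BO F) + PiL (L1 rC1 rC2 BC F) = F.
Proof.
apply/eqP; rewrite -subr_eq0; apply/eqP; apply: newton_unique => phi.
rewrite (is_linear_formB (B_linr phi)) (is_linear_formD (B_linr phi)).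
by rewrite (newton_piece BO_bil) (newton_piece BC_bil) (ax_split hax) subrr.
Qed.

Lemma double_layer_trace_sum f : (exists F, Tr2 F = f) ->
  qeq hn2 Tr2 (TrDL rO1 rO2 BO f + TrDL rC1 rC2 BC f) (- f).
Proof.
move=> hf; rewrite /TrDL /= addrACA -(is_linearD Tr2_lin) newton_pieces_sum.
rewrite (preTr2_spec hf) -addrA addNr addr0; apply: (qeq_refl hilb2 Tr2_lin).
by case: hf => F <-; exists (- F); rewrite (is_linearN Tr2_lin).
Qed.

Lemma single_layer_neumann_sum (g : D1h fw -> C) : in_N2 g ->
  N2_eq (fun d => Mneu rO1 BO (rO2 (SL g)) d + Mneu rC1 BC (rC2 (SL g)) d) g.
Proof.
move=> hg phi /=.
have g_null w : qnorm hn1 Tr1 (Tr1 w) = 0 -> g (Tr1 w) = 0.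
  by case: hg => _ [M hM] w0; apply: cmod_le0; have := hM w; rewrite w0 mulr0.
have freeO : neumann_free rO1 rO2 BO (SL g).
  rewrite -[SL g]subr0.
  apply: (neumann_free_of_solution rO1_lin BO_bil (ax_split hax) glue_Omega g_null).
  by move=> psi; rewrite (SL_spec hg) (piece0r BO_bil) add0r.
have freeC : neumann_free rC1 rC2 BC (SL g).
  rewrite -[SL g]subr0.
  apply: (neumann_free_of_solution rC1_lin BC_bil B_splitC glue_C g_null).
  by move=> psi; rewrite (SL_spec hg) (piece0r BC_bil) add0r.
rewrite (Mneu_spec BO_bil freeO) (Mneu_spec BC_bil freeC) -(ax_split hax).
exact: SL_spec.
Qed.

Lemma double_layer_neumann_jump (f : D2h fw) :
  N2_eq (fun d => Mneu rO1 BO (DL rO1 rO2 BO f) d - Mneu rC1 BC (DL rC1 rC2 BC f) d)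
        (fun _ => 0).
Proof.
move=> phi /=; rewrite /DL /=.
have := newton_pieces_sum (preTr2 f).
set F := preTr2 f; set PO := PiL (L1 _ _ _ F); set PC := PiL (L1 _ _ _ F) => PF.
have freeO : neumann_free rO1 rO2 BO (PO - F).
  apply: (neumann_free_of_solution rO1_lin BO_bil (ax_split hax) glue_Omega
    (l := fun _ => 0)) => //.
  by move=> psi; rewrite (newton_piece BO_bil) addr0.
have freeC : neumann_free rC1 rC2 BC (PC - F).
  apply: (neumann_free_of_solution rC1_lin BC_bil B_splitC glue_C (l := fun _ => 0)) => //.
  by move=> psi; rewrite (newton_piece BC_bil) addr0.
rewrite [- rO2 F + _]addrC -(is_linearB rO2_lin) [- rC2 F + _]addrC -(is_linearB rC2_lin).
rewrite (Mneu_spec BO_bil freeO) (Mneu_spec BC_bil freeC) (pieceBr BO_bil) (pieceBr BC_bil).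
have PO_sol := newton_piece BO_bil F phi; rewrite (ax_split hax) in PO_sol.
have PF_C : BC (rC1 phi) (rC2 F) = BC (rC1 phi) (rC2 PO) + BC (rC1 phi) (rC2 PC).
  by rewrite -(pieceDr BC_bil) PF.
by rewrite PF_C -PO_sol; ring.
Qed.

Lemma partial_traces_agree (TrO : HO2 fw -> D2h fw) (TrC : HC2 fw -> D2h fw) :
  is_partial_trace rO2 TrO -> is_partial_trace rC2 TrC ->
  forall u, qeq hn2 Tr2 (TrO (rO2 u) - TrC (rC2 u)) 0.
Proof.
move=> [O_range _ _ O_tr] [C_range _ _ C_tr] u.
have [G1 hG1] := O_range u; have [G2 hG2] := C_range u.
split; first by exists (G1 - G2); rewrite (is_linearB Tr2_lin) hG1 hG2.
  by exists 0; rewrite (is_linear0 Tr2_lin).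
have -> : TrO (rO2 u) - TrC (rC2 u) - 0 = Tr2 (u - G2) - Tr2 (u - G1).
  rewrite subr0 !(is_linearB Tr2_lin) hG1 hG2 opprB.
  by rewrite [RHS]addrC [RHS]addrA subrK.
apply/eqP; rewrite eq_le qnorm_ge0 andbT; apply: le_trans (qnormB_le hilb2 Tr2_lin _ _) _.
have [_ _ qO] := O_tr u; have [_ _ qC] := C_tr u.
by rewrite !(is_linearB Tr2_lin) hG1 hG2 qO qC addr0.
Qed.

End Framework.

Theorem lemma5p4 (R : realType) (fw : framework R) :
  framework_axioms fw ->
  [/\ (* Tr^O D^B_O f + Tr^C D^B_C f = - f  in D_2 *)
      forall f : D2h fw, (exists F, Tr2 F = f) ->
        qeq (@hn2 _ fw) (@Tr2 _ fw)
          (TrDL (@rO1 _ fw) (@rO2 _ fw) (@BO _ fw) f + TrDL (@rC1 _ fw) (@rC2 _ fw) (@BC _ fw) f)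
          (- f),
      (* M^O((S g)|_O) + M^C((S g)|_C) = g  in N_2 *)
      forall g : D1h fw -> R[i], in_N2 g ->
        N2_eq (fun d => Mneu (@rO1 _ fw) (@BO _ fw) (rO2 (SL g)) d
                        + Mneu (@rC1 _ fw) (@BC _ fw) (rC2 (SL g)) d) g,
      (* M^O(D^B_O f) - M^C(D^B_C f) = 0  in N_2 *)
      forall f : D2h fw, (exists F, Tr2 F = f) ->
        N2_eq (fun d => Mneu (@rO1 _ fw) (@BO _ fw) (DL (@rO1 _ fw) (@rO2 _ fw) (@BO _ fw) f) d
                        - Mneu (@rC1 _ fw) (@BC _ fw) (DL (@rC1 _ fw) (@rC2 _ fw) (@BC _ fw) f) d)
              (fun _ => 0) &
      (* with partial traces: Tr^O((S g)|_O) - Tr^C((S g)|_C) = 0  in D_2 *)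
      forall (TrO : HO2 fw -> D2h fw) (TrC : HC2 fw -> D2h fw),
        is_partial_trace (@rO2 _ fw) TrO -> is_partial_trace (@rC2 _ fw) TrC ->
        forall g : D1h fw -> R[i], in_N2 g ->
          qeq (@hn2 _ fw) (@Tr2 _ fw) (TrO (rO2 (SL g)) - TrC (rC2 (SL g))) 0].
Proof.
move=> hax; split.
- exact: double_layer_trace_sum hax.
- exact: single_layer_neumann_sum hax.
- by move=> f _; apply: double_layer_neumann_jump hax f.
- by move=> TrO TrC hO hC g _; apply: partial_traces_agree hax TrO TrC hO hC (SL g).
Qed.
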